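(* Let $f\in C(I)$, the partition $\Delta$ and scaling functions $\alpha_{i,r}\in C(I)$ with $\|\alpha\|_\infty<1$ be fixed. Let $A$ be the set of sequences $b=\{b_r\}_{r\in\mathbb{N}}$ with $b_r\in C(I)$, $b_r(x_0)=f(x_0)$, $b_r(x_N)=f(x_N)$ for all $r$, and $\sup_r\|b_r\|_\infty<\infty$, with the metric $\|b-c\|_\infty=\sup_{r}\|b_r-c_r\|_\infty$. Then the map $\mathcal{A}:A\to C(I)$, $\mathcal{A}(b)=f^\alpha_{\Delta,b}$, is Lipschitz continuous (with respect to the supremum norm on $C(I)$).
   Context: $I=[x_0,x_N]$ with partition $\Delta: x_0<x_1<\dots<x_N$, $I_i=[x_{i-1},x_i]$, $l_i:I\to I_i$ the affine bijection $l_i(x)=\frac{x_i-x_{i-1}}{x_N-x_0}x+\frac{x_Nx_{i-1}-x_0x_i}{x_N-x_0}$, $Q_i=l_i^{-1}$. $\|\alpha\|_\infty:=\sup_r\max_i\|\alpha_{i,r}\|_\infty$. For $b\in A$, $f^\alpha_{\Delta,b}$ (the non-stationary $\alpha$-fractal function) is the uniform limit, independent of $g\in C_f(I)=\{g\in C(I):g(x_0)=f(x_0),g(x_N)=f(x_N)\}$, of $T^{\alpha_1}\circ\cdots\circ T^{\alpha_r}g$, where $(T^{\alpha_r}g)(x)=f(x)+\alpha_{i,r}(Q_i(x))(g-b_r)(Q_i(x))$ for $x\in I_i$. *)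

From Stdlib Require Import Reals Lra.
Open Scope R_scope.

Definition inI (x : nat -> R) (N : nat) (t : R) : Prop := x 0%nat <= t <= x N.

Definition cont_on (x : nat -> R) (N : nat) (h : R -> R) : Prop :=
  forall t, inI x N t -> forall eps, 0 < eps ->
    exists delta, 0 < delta /\
      forall s, inI x N s -> Rabs (s - t) < delta -> Rabs (h s - h t) < eps.

(* Q_i = l_i^{-1}, where l_i(x) = (x_i - x_{i-1})/(x_N - x_0) x
   + (x_N x_{i-1} - x_0 x_i)/(x_N - x_0). *)
Definition Qi (x : nat -> R) (N i : nat) (y : R) : R :=
  x 0%nat + (x N - x 0%nat) * (y - x (i - 1)%nat) / (x i - x (i - 1)%nat).

(* Index i in {1..N} of the (first) subinterval I_i = [x_{i-1}, x_i] containing t. *)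
Fixpoint find_seg (x : nat -> R) (t : R) (i n : nat) : nat :=
  match n with
  | O => i
  | S n' => if Rle_dec t (x i) then i else find_seg x t (S i) n'
  end.
Definition seg (x : nat -> R) (N : nat) (t : R) : nat := find_seg x t 1%nat (N - 1)%nat.

(* The operator T^{alpha_r}:
   (T^{alpha_r} g)(t) = f(t) + alpha_{i,r}(Q_i t) * (g - b_r)(Q_i t), t in I_i.
   (At the partition nodes both candidate formulas agree for g in C_f(I).) *)
Definition Top (f : R -> R) (x : nat -> R) (N : nat)
  (alpha : nat -> nat -> R -> R) (b : nat -> R -> R) (r : nat) (g : R -> R)
  : R -> R :=
  fun t => let i := seg x N t in
           f t + alpha i r (Qi x N i t) * (g (Qi x N i t) - b r (Qi x N i t)).

Fixpoint compT (f : R -> R) (x : nat -> R) (N : nat)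
  (alpha : nat -> nat -> R -> R) (b : nat -> R -> R) (k n : nat) (g : R -> R)
  : R -> R :=
  match n with
  | O => g
  | S n' => Top f x N alpha b k (compT f x N alpha b (S k) n' g)
  end.

Definition in_Cf (f : R -> R) (x : nat -> R) (N : nat) (g : R -> R) : Prop :=
  cont_on x N g /\ g (x 0%nat) = f (x 0%nat) /\ g (x N) = f (x N).

Definition in_A (f : R -> R) (x : nat -> R) (N : nat) (b : nat -> R -> R) : Prop :=
  (forall r, in_Cf f x N (b r)) /\
  (exists B, forall r t, inI x N t -> Rabs (b r t) <= B).

(* phi is the non-stationary alpha-fractal function f^alpha_{Delta,b}:
   for every g in C_f(I), T^{alpha_1} o ... o T^{alpha_r} g -> phi uniformly on I. *)
Definition is_fractal (f : R -> R) (x : nat -> R) (N : nat)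
  (alpha : nat -> nat -> R -> R) (b : nat -> R -> R) (phi : R -> R) : Prop :=
  forall g, in_Cf f x N g ->
    forall eps, 0 < eps -> exists M : nat, forall n : nat, (M <= n)%nat ->
      forall t, inI x N t -> Rabs (compT f x N alpha b 0 n g t - phi t) < eps.

(* If two iterates differ by at most K on I and |b_r - c_r| <= d, then
   T^{alpha_r} applied to them (with b, resp. c) gives functions differing by at
   most s (K + d), where s = ||alpha||_oo < 1.  The bound K = s d / (1 - s) is the
   fixed point of K |-> s (K + d), so all iterates T^{alpha_1} o ... o T^{alpha_n} f
   for b and for c stay within s d / (1 - s) of each other, and so do their limits
   f^alpha_{Delta,b} and f^alpha_{Delta,c}: the Lipschitz constant is s / (1 - s). *)
From Stdlib Require Import Reals Lra Lia.
Open Scope R_scope.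

Lemma Un_cv_le_const (u : nat -> R) (l B : R) :
  (forall n, u n <= B) -> Un_cv u l -> l <= B.
Proof.
  intros Hu Hl. apply (Rle_cv_lim Hu Hl).
  intros eps Heps. exists 0%nat. intros n _.
  unfold R_dist. rewrite Rminus_diag, Rabs_R0. exact Heps.
Qed.

Lemma Un_cv_dist_le (u v : nat -> R) (l m B : R) :
  (forall n, Rabs (u n - v n) <= B) -> Un_cv u l -> Un_cv v m -> Rabs (l - m) <= B.
Proof.
  intros Huv Hu Hv.
  exact (Un_cv_le_const _ _ _ Huv (cv_cvabs _ _ (CV_minus _ _ _ _ Hu Hv))).
Qed.

Lemma find_seg_spec (x : nat -> R) (t : R) (n i : nat) :
  x (i - 1)%nat <= t ->
  let j := find_seg x t i n in
  (i <= j <= i + n)%nat /\ x (j - 1)%nat <= t /\ (t <= x j \/ j = (i + n)%nat).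
Proof.
  revert i. induction n as [|n IH]; intros i Hi; simpl.
  - split; [lia |]. split; [exact Hi | right; lia].
  - destruct (Rle_dec t (x i)) as [Hle | Hgt].
    + split; [lia |]. split; [exact Hi | left; exact Hle].
    + assert (HSi : x (S i - 1)%nat <= t) by (rewrite Nat.sub_succ, Nat.sub_0_r; lra).
      destruct (IH (S i) HSi) as [Hj [Hlo Hhi]].
      split; [lia |]. split; [exact Hlo |].
      destruct Hhi as [Hhi | Hhi]; [left; exact Hhi | right; lia].
Qed.

Lemma in_Cf_self (f : R -> R) (x : nat -> R) (N : nat) :
  cont_on x N f -> in_Cf f x N f.
Proof. intros Hf. split; [exact Hf | split; reflexivity]. Qed.

Lemma is_fractal_Un_cv (f : R -> R) (x : nat -> R) (N : nat)
  (alpha : nat -> nat -> R -> R) (b : nat -> R -> R) (phi g : R -> R) (t : R) :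
  is_fractal f x N alpha b phi -> in_Cf f x N g -> inI x N t ->
  Un_cv (fun n => compT f x N alpha b 0 n g t) (phi t).
Proof.
  intros Hphi Hg Ht eps Heps.
  destruct (Hphi g Hg eps Heps) as [M HM].
  exists M. intros n Hn. exact (HM n Hn t Ht).
Qed.

Section Partition.

Variables (x : nat -> R) (N : nat).
Hypothesis HN : (1 <= N)%nat.
Hypothesis Hx : forall i : nat, (i < N)%nat -> x i < x (S i).

Lemma partition_le (i j : nat) : (i <= j <= N)%nat -> x i <= x j.
Proof.
  intros Hij. induction j as [|j IH].
  - replace i with 0%nat by lia. lra.
  - destruct (Nat.eq_dec i (S j)) as [-> | Hne]; [lra |].
    assert (x j < x (S j)) by (apply Hx; lia).
    assert (x i <= x j) by (apply IH; lia). lra.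
Qed.

Lemma inI_x0 : inI x N (x 0%nat).
Proof. split; [lra | apply partition_le; lia]. Qed.

Lemma seg_spec (t : R) : inI x N t ->
  (1 <= seg x N t <= N)%nat /\ x (seg x N t - 1)%nat <= t <= x (seg x N t).
Proof.
  intros [H0 HN'].
  destruct (find_seg_spec x t (N - 1) 1 H0) as [Hj [Hlo Hhi]].
  unfold seg. split; [lia |]. split; [exact Hlo |].
  destruct Hhi as [Hhi | ->]; [exact Hhi |].
  replace (1 + (N - 1))%nat with N by lia. exact HN'.
Qed.

Lemma Qi_seg_inI (t : R) : inI x N t -> inI x N (Qi x N (seg x N t) t).
Proof.
  intros Ht. destruct (seg_spec t Ht) as [Hi [Hlo Hhi]].
  set (i := seg x N t) in *.
  assert (Hlen : x (i - 1)%nat < x i).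
  { replace i with (S (i - 1)) at 2 by lia. apply Hx. lia. }
  assert (HI : x 0%nat <= x N) by (apply partition_le; lia).
  set (u := (t - x (i - 1)%nat) / (x i - x (i - 1)%nat)).
  assert (Hu0 : 0 <= u) by (apply Rle_mult_inv_pos; lra).
  assert (Hu1 : 0 <= 1 - u).
  { replace (1 - u) with ((x i - t) / (x i - x (i - 1)%nat)) by (unfold u; field; lra).
    apply Rle_mult_inv_pos; lra. }
  unfold inI, Qi.
  replace ((x N - x 0%nat) * (t - x (i - 1)%nat) / (x i - x (i - 1)%nat))
    with ((x N - x 0%nat) * u) by (unfold u, Rdiv; ring).
  split; nra.
Qed.

Variables (f : R -> R) (alpha : nat -> nat -> R -> R) (s : R).
Hypothesis Halpha : forall (i r : nat) (t : R),
  (1 <= i <= N)%nat -> inI x N t -> Rabs (alpha i r t) <= s.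

Lemma Top_dist_le (b c : nat -> R -> R) (r : nat) (G H : R -> R) (K d : R) :
  (forall t, inI x N t -> Rabs (G t - H t) <= K) ->
  (forall t, inI x N t -> Rabs (b r t - c r t) <= d) ->
  forall t, inI x N t ->
    Rabs (Top f x N alpha b r G t - Top f x N alpha c r H t) <= s * (K + d).
Proof.
  intros HGH Hbc t Ht. unfold Top.
  destruct (seg_spec t Ht) as [Hi _].
  pose proof (Qi_seg_inI t Ht) as Hq.
  set (i := seg x N t) in *. set (q := Qi x N i t) in *.
  replace (f t + alpha i r q * (G q - b r q) - (f t + alpha i r q * (H q - c r q)))
    with (alpha i r q * ((G q - H q) - (b r q - c r q))) by ring.
  rewrite Rabs_mult.
  apply Rmult_le_compat; [apply Rabs_pos | apply Rabs_pos | exact (Halpha i r q Hi Hq) |].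
  eapply Rle_trans; [apply Rabs_triang |]. rewrite Rabs_Ropp.
  apply Rplus_le_compat; [exact (HGH q Hq) | exact (Hbc q Hq)].
Qed.

Hypothesis Hs : 0 <= s < 1.

Lemma compT_dist_le (b c : nat -> R -> R) (d : R) :
  0 <= d ->
  (forall r t, inI x N t -> Rabs (b r t - c r t) <= d) ->
  forall n k g t, inI x N t ->
    Rabs (compT f x N alpha b k n g t - compT f x N alpha c k n g t) <= s / (1 - s) * d.
Proof.
  intros Hd Hbc n. induction n as [|n IH]; intros k g t Ht; simpl.
  - rewrite Rminus_diag, Rabs_R0.
    apply Rmult_le_pos; [apply Rle_mult_inv_pos |]; lra.
  - apply Rle_trans with (s * (s / (1 - s) * d + d)).
    + apply Top_dist_le; [intros u Hu; exact (IH (S k) g u Hu) | exact (Hbc k) | exact Ht].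
    + right. field. lra.
Qed.

End Partition.

Theorem mainTheorem10
  (N : nat) (x : nat -> R) (f : R -> R) (alpha : nat -> nat -> R -> R)
  (HN : (1 <= N)%nat)
  (Hx : forall i : nat, (i < N)%nat -> x i < x (S i))
  (Hf : cont_on x N f)
  (Halpha_cont : forall i r : nat, (1 <= i <= N)%nat -> cont_on x N (alpha i r))
  (Halpha_norm : exists s : R, s < 1 /\
     forall (i r : nat) (t : R), (1 <= i <= N)%nat -> inI x N t ->
       Rabs (alpha i r t) <= s) :
  exists L : R, 0 <= L /\
    forall (b c : nat -> R -> R) (phib phic : R -> R),
      in_A f x N b -> in_A f x N c ->
      is_fractal f x N alpha b phib -> is_fractal f x N alpha c phic ->
      forall d : R,
        (forall (r : nat) (t : R), inI x N t -> Rabs (b r t - c r t) <= d) ->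
        forall t : R, inI x N t -> Rabs (phib t - phic t) <= L * d.
Proof.
  destruct Halpha_norm as [s [Hs1 Halpha]].
  pose proof (inI_x0 x N HN Hx) as Hx0_inI.
  assert (Hs : 0 <= s < 1).
  { split; [| exact Hs1].
    apply Rle_trans with (Rabs (alpha 1%nat 0%nat (x 0%nat))); [apply Rabs_pos |].
    apply Halpha; [lia | exact Hx0_inI]. }
  exists (s / (1 - s)). split; [apply Rle_mult_inv_pos; lra |].
  (* Membership in A (and continuity of alpha) only guarantees that the fractal
     functions exist; the estimate needs just the bound on b - c. *)
  intros b c phib phic _ _ Hphib Hphic d Hbc t Ht.
  assert (Hd : 0 <= d) by exact (Rle_trans _ _ _ (Rabs_pos _) (Hbc 0%nat _ Hx0_inI)).
  apply (Un_cv_dist_le (fun n => compT f x N alpha b 0 n f t)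
                       (fun n => compT f x N alpha c 0 n f t)).
  - intros n. eapply compT_dist_le; eauto.
  - eapply is_fractal_Un_cv; eauto using in_Cf_self.
  - eapply is_fractal_Un_cv; eauto using in_Cf_self.
Qed.
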